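(* Let $R$ be Rado's poset. Then $\bigcup AM_m(R)$ is bqo for every integer $m$, and $R$ embeds into $AM(R)$.
   Context: Rado's poset $R$ has underlying set $V=\{(m,n)\in\mathbb{N}^2: m<n\}$ with $(m,n)\leq_R(m',n')$ iff either ($m=m'$ and $n\leq n'$) or $n<m'$. $AM(R)$ is the set of maximal antichains of $R$ ordered by domination ($X\leq Y$ iff each $x\in X$ is below some $y\in Y$); $AM_m(R)$ is the set of maximal antichains with exactly $m$ elements, and $\bigcup AM_m(R)$ is the union of these antichains with the order induced by $R$. An embedding is a map $e$ with $x\leq y\iff e(x)\leq e(y)$. Barriers and bqo: finite subsets of $\mathbb{N}$ are identified with their increasing enumerations; $s\triangleleft t$ means there is a finite $r\subseteq\mathbb{N}$ with $s$ a proper initial segment of $r$ and $t$ equal to $r$ minus its least element. A barrier is an infinite set $B$ of finite subsets of $\mathbb{N}$, no member a proper subset of another, such that every infinite $X\subseteq\bigcup B$ has a nonempty initial segment in $B$; its order type is that of $B$ under the lexicographic order. A map $f$ from a barrier into a quasi-order $Q$ is good if $f(s)\leq f(t)$ for some $s\triangleleft t$; $Q$ is $\alpha$-bqo if every map from a barrier of order type at most $\alpha$ into $Q$ is good, and bqo if it is $\alpha$-bqo for all countable $\alpha$. *)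

From mathcomp Require Import all_boot.
Set Implicit Arguments. Unset Strict Implicit. Unset Printing Implicit Defensive.

Definition radoV (p : nat * nat) : Prop := p.1 < p.2.

Definition radoLe (p q : nat * nat) : Prop :=
  (p.1 = q.1 /\ p.2 <= q.2) \/ p.2 < q.1.

Definition pset := nat * nat -> Prop.

Definition antichain (X : pset) : Prop :=
  (forall x, X x -> radoV x) /\
  (forall x y, X x -> X y -> x <> y -> ~ radoLe x y).

Definition max_antichain (X : pset) : Prop :=
  antichain X /\
  (forall Y : pset, antichain Y -> (forall x, X x -> Y x) -> forall y, Y y -> X y).

Definition has_card (X : pset) (m : nat) : Prop :=
  exists l : seq (nat * nat), uniq l /\ size l = m /\ (forall x, X x <-> x \in l).

Definition dominated (X Y : pset) : Prop :=
  forall x, X x -> exists y, Y y /\ radoLe x y.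

Definition UAM (m : nat) : pset :=
  fun x => exists X, max_antichain X /\ has_card X m /\ X x.

(* finite subsets of N are represented by their increasing enumerations *)
Definition fin_nat_set (s : seq nat) : Prop := sorted ltn s.

(* s <| t : there is a finite r with s a proper initial segment of r and
   t = r minus its least element *)
Definition tri (s t : seq nat) : Prop :=
  exists r : seq nat, fin_nat_set r /\
    (exists k, k < size r /\ s = take k r) /\ t = behead r.

Definition infinite_family (B : seq nat -> Prop) : Prop :=
  forall l : seq (seq nat), exists s, B s /\ s \notin l.

Definition infinite_nat_set (X : nat -> Prop) : Prop :=
  forall n, exists x, n <= x /\ X x.

Definition nonempty_initial_segment (s : seq nat) (X : nat -> Prop) : Prop :=
  s <> [::] /\ fin_nat_set s /\ (forall x, x \in s -> X x) /\
  (forall x, X x -> x <= last 0 s -> x \in s).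

Definition barrier (B : seq nat -> Prop) : Prop :=
  (forall s, B s -> fin_nat_set s) /\
  infinite_family B /\
  (forall s t, B s -> B t -> {subset s <= t} -> s = t) /\
  (forall X : nat -> Prop, infinite_nat_set X ->
     (forall x, X x -> exists s, B s /\ x \in s) ->
     exists s, B s /\ nonempty_initial_segment s X).

(* a map f : B -> Q (Q given as a carrier predicate with quasi-order le) is good *)
Definition good {T : Type} (le : T -> T -> Prop) (B : seq nat -> Prop)
  (f : seq nat -> T) : Prop :=
  exists s t, B s /\ B t /\ tri s t /\ le (f s) (f t).

Definition bqo {T : Type} (le : T -> T -> Prop) (Q : T -> Prop) : Prop :=
  forall B, barrier B -> forall f : seq nat -> T,
    (forall s, B s -> Q (f s)) -> good le B f.

From mathcomp Require Import all_boot zify.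
From Stdlib Require Import Classical ClassicalEpsilon Wf_nat.
Set Implicit Arguments. Unset Strict Implicit. Unset Printing Implicit Defensive.

(* The points of a maximal antichain X of R with m elements have first
   coordinates < m: if (c, d) is in X and c >= m, some a < c is not a first
   coordinate of a point of X, and then (a, d) is incomparable with all of X.

   So a map f from a barrier B into the union of AM_m(R) colours B by the m
   possible first coordinates.  By the Nash-Williams partition theorem, proved
   with the combinatorial forcing of Galvin and Prikry (accepting and rejecting
   finite sets, a fusion sequence deciding every finite set, and a greedy
   diagonalisation), the colour is a constant c on the part of B living on some
   infinite set N.  Points with first coordinate c are ordered by their second
   coordinate, and a descent finds s <| t with f s <= f t: if s and t are the
   elements of B that are initial segments of an infinite Y included in N and
   of Y minus its minimum, then s <| t, and when (f t).2 < (f s).2 one goes on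
   with Y minus its minimum.

   The embedding sends (p, q) to the maximal antichain
   {(i, p+1) | i <= p} U {(p+1, q+2)}. *)

Local Notation infinite := infinite_nat_set.
Local Notation initial_seg := nonempty_initial_segment.

Definition included (X Y : nat -> Prop) : Prop := forall x, X x -> Y x.

Definition eventually (P : nat -> Prop) : Prop := exists b, forall n, b <= n -> P n.

Definition above (s : seq nat) (n : nat) : Prop := forall z, z \in s -> z < n.

Lemma ex_minimum (P : nat -> Prop) :
  (exists n, P n) -> exists2 n, P n & forall k, P k -> n <= k.
Proof.
move=> exP.
have [n [[Pn n_min] _]] :=
  dec_inh_nat_subset_has_unique_least_element P (fun n => classic (P n)) exP.
by exists n => // k /n_min/leP.
Qed.

Lemma dependent_choice (S : Type) (I : S -> Prop) (R : S -> S -> Prop) x0 :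
  I x0 -> (forall x, I x -> exists y, I y /\ R x y) ->
  exists g : nat -> S, g 0 = x0 /\ forall k, I (g k) /\ R (g k) (g k.+1).
Proof.
move=> Ix0 succ.
have next (x : {x | I x}) : {y : {y | I y} | R (sval x) (sval y)}.
  have [y [Iy Rxy]] := constructive_indefinite_description _ (succ _ (svalP x)).
  by exists (exist _ y Iy).
pose g k := iter k (fun x => sval (next x)) (exist _ x0 Ix0).
exists (fun k => sval (g k)); split=> // k.
by split; [exact: svalP | exact: svalP (next (g k))].
Qed.

Lemma eventually_and (P Q : nat -> Prop) :
  eventually P -> eventually Q -> eventually (fun n => P n /\ Q n).
Proof.
by move=> [a hP] [b hQ]; exists (maxn a b) => n; rewrite geq_max => /andP[/hP ? /hQ].
Qed.

Lemma eventually_all (T : eqType) (l : seq T) (P : T -> nat -> Prop) :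
  (forall x, x \in l -> eventually (P x)) ->
  eventually (fun n => forall x, x \in l -> P x n).
Proof.
elim: l => [|y l IH] evP; first by exists 0.
have [b hb] :=
  eventually_and (evP y (mem_head _ _)) (IH (fun x xl => evP x (predU1r _ _ xl))).
by exists b => n /hb[Py Pl] x /predU1P[->|/Pl].
Qed.

Lemma above_eventually s : eventually (above s).
Proof.
exists (\max_(z <- s) z).+1 => n hn z zs.
by apply: leq_trans hn; rewrite ltnS; exact: (leq_bigmax_seq _ zs).
Qed.

Lemma infinite_tail X (P : nat -> Prop) :
  infinite X -> eventually P -> infinite (fun x => X x /\ P x).
Proof.
move=> hX [b hb] n; have [x [+ Xx]] := hX (maxn n b); rewrite geq_max => /andP[nx bx].
by exists x; do !split=> //; apply: hb.
Qed.

Lemma infinite_of_not_eventually X : ~ eventually (fun n => ~ X n) -> infinite X.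
Proof.
by move=> nev n; apply: NNPP => nX; apply: nev; exists n => x nx Xx; apply: nX; exists x.
Qed.

Lemma path_ltn_le_last a s x : path ltn a s -> x \in a :: s -> x <= last a s.
Proof.
elim: s a x => [|b s IH] a x /=; first by rewrite inE => _ /eqP ->.
case/andP=> ab hs /predU1P[->|]; last exact: IH.
exact: leq_trans (ltnW ab) (IH _ _ hs (mem_head _ _)).
Qed.

Lemma sorted_le_last s x : sorted ltn s -> x \in s -> x <= last 0 s.
Proof. by case: s => // a s; exact: path_ltn_le_last. Qed.

Lemma last_mem s : s != [::] -> last 0 s \in s.
Proof. by case: s => // a s _; exact: mem_last. Qed.

Lemma sorted_rcons s n : sorted ltn s -> above s n -> sorted ltn (rcons s n).
Proof. by case: s => //= a s hs hn; rewrite rcons_path hs; apply: hn; exact: mem_last. Qed.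

Lemma sorted_subset_filter (l s : seq nat) :
  sorted ltn l -> sorted ltn s -> {subset s <= l} -> s = filter (mem s) l.
Proof.
move=> sl ss sub_sl; apply: (irr_sorted_eq ltn_trans ltnn) => //.
  exact: sorted_filter ltn_trans _ _ sl.
by move=> x; rewrite mem_filter andb_idr //; apply: sub_sl.
Qed.

Fixpoint subseqs (l : seq nat) : seq (seq nat) :=
  if l is x :: l' then [seq x :: s | s <- subseqs l'] ++ subseqs l' else [:: [::]].

Lemma mem_subseqs s l : (s \in subseqs l) = subseq s l.
Proof.
elim: l s => [|x l IH] [|y s] //=; rewrite mem_cat IH ?sub0seq ?orbT //.
have [-> | yx] := eqVneq y x.
  have cons_inj : injective (cons x) by move=> ? ? [].
  by rewrite (mem_map cons_inj) IH orb_idr // => /cons_subseq.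
by case: mapP => // -[s' _ [yx' _]]; rewrite yx' eqxx in yx.
Qed.

Lemma mem_subseqs_filter (a : pred nat) l : filter a l \in subseqs l.
Proof. by rewrite mem_subseqs filter_subseq. Qed.

Lemma sorted_cons_lt a s x : sorted ltn (a :: s) -> x \in s -> a < x.
Proof. by move/(order_path_min ltn_trans)/allP; apply. Qed.

Lemma sorted_prefix (r s : seq nat) :
  sorted ltn r -> sorted ltn s -> {subset s <= r} ->
  (forall x y, x \in r -> y \in s -> x <= y -> x \in s) -> s = take (size s) r.
Proof.
elim: r s => [|a r IH] [|b s] //=; first by move=> _ _ /(_ b (mem_head _ _)).
move=> sr ss sub down.
have ab : a = b.
  have le_ab : a <= b.
    by case/predU1P: (sub b (mem_head _ _)) => [-> // | /(sorted_cons_lt sr)/ltnW].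
  apply/eqP; rewrite eqn_leq le_ab /=.
  have := down a b (mem_head _ _) (mem_head _ _) le_ab.
  by rewrite inE => /predU1P[-> // | /(sorted_cons_lt ss)/ltnW].
subst b; congr cons.
apply: IH => [||x xs|x y xr ys xy]; rewrite ?(path_sorted sr) ?(path_sorted ss) //.
  case/predU1P: (sub x (predU1r _ _ xs)) => // xa.
  by move: (sorted_cons_lt ss xs); rewrite xa ltnn.
case/predU1P: (down x y (predU1r _ _ xr) (predU1r _ _ ys) xy) => // xa.
by move: (sorted_cons_lt sr xr); rewrite xa ltnn.
Qed.

Lemma initial_seg_ext s X Y : (forall x, X x <-> Y x) -> initial_seg s X -> initial_seg s Y.
Proof.
move=> XY [s0 [ss [sX down]]]; do 3!split=> //.
- by move=> x /sX/XY.
- by move=> x /XY; apply: down.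
Qed.

Lemma initial_seg_min s Y y :
  initial_seg s Y -> Y y -> (forall x, Y x -> y <= x) -> y \in s.
Proof.
move=> [/eqP s0 [_ [sY down]]] Yy ymin.
by apply: down => //; apply: ymin; apply: sY; exact: last_mem.
Qed.

Lemma initial_seg_cat s Y :
  s <> [::] -> sorted ltn s -> (forall y, Y y -> above s y) ->
  initial_seg s (fun x => x \in s \/ Y x).
Proof.
move=> s0 ss Yabove; do 3!split=> //; first by move=> x; left.
move=> x [//|Yx] xs; have := Yabove x Yx _ (last_mem (introN eqP s0)); lia.
Qed.

Lemma initial_seg_subset s t Y :
  initial_seg s Y -> initial_seg t Y -> last 0 s <= last 0 t -> {subset s <= t}.
Proof.
move=> [_ [ss [sY _]]] [_ [_ [_ down]]] st x xs.
by apply: down; [exact: sY | exact: leq_trans (sorted_le_last ss xs) st].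
Qed.

Lemma initial_seg_cons_min Y y t :
  Y y -> (forall x, Y x -> y <= x) ->
  initial_seg t (fun x => Y x /\ y < x) -> initial_seg (y :: t) Y.
Proof.
move=> Yy ymin [t0 [st [tY down]]]; split=> //; split.
  by rewrite /fin_nat_set /= (path_sortedE ltn_trans) st andbT; apply/allP => x /tY[].
split; first by move=> x /predU1P[->//|/tY[]].
move=> x Yx; rewrite inE; case: ltngtP (ymin x Yx) => // yx _ xle.
apply/orP; right; apply: down; first by split.
by case: t t0 {st tY} xle.
Qed.

Lemma tri_initial_segs (B : seq nat -> Prop) Y y s t :
  (forall s t, B s -> B t -> {subset s <= t} -> s = t) ->
  B s -> B t -> Y y -> (forall x, Y x -> y <= x) ->
  initial_seg s Y -> initial_seg t (fun x => Y x /\ y < x) -> tri s t.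
Proof.
move=> Banti Bs Bt Yy ymin sY tY.
have rY := initial_seg_cons_min Yy ymin tY.
have t_not_sub : ~ {subset t <= s}.
  move=> /(Banti _ _ Bt Bs) ts; have [_ [_ [tY' _]]] := tY.
  by have [_] := tY' y ltac:(rewrite ts; exact: initial_seg_min sY Yy ymin); rewrite ltnn.
have [_ [sr [rY' _]]] := rY.
have s_pre : s = take (size s) (y :: t).
  have [_ [ss [_ down]]] := sY.
  apply: sorted_prefix => //.
    case: (leqP (last 0 s) (last 0 (y :: t))) => [|lt]; first exact: initial_seg_subset sY rY.
    by case: t_not_sub => x xt; apply: (initial_seg_subset rY sY (ltnW lt)); rewrite inE xt orbT.
  move=> x z xr zs xz; apply: down; first exact: rY'.
  exact: leq_trans xz (sorted_le_last ss zs).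
exists (y :: t); split=> //; split=> //; exists (size s); split=> //.
rewrite ltnNge; apply/negP => /take_oversize ov; apply: t_not_sub => x xt.
by rewrite s_pre ov inE xt orbT.
Qed.

Section Fusion.

Variable D : seq nat -> (nat -> Prop) -> Prop.
Hypothesis D_tail :
  forall s M N, D s M -> included (fun x => N x /\ above s x) M -> D s N.
Hypothesis D_dense :
  forall s M, infinite M -> exists N, [/\ infinite N, included N M & D s N].

Lemma D_sub s M N : D s M -> included N M -> D s N.
Proof. by move=> DM NM; apply: D_tail DM _ => x [/NM]. Qed.

Lemma D_dense_all (L : seq (seq nat)) M : infinite M ->
  exists N, [/\ infinite N, included N M & forall s, s \in L -> D s N].
Proof.
elim: L M => [|s L IH] M hM; first by exists M; split.
have [N1 [hN1 N1M DL]] := IH M hM; have [N2 [hN2 N2N1 Ds]] := D_dense s hN1.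
exists N2; split=> [//|x /N2N1/N1M //|t /predU1P[-> //|tL]].
exact: D_sub (DL t tL) N2N1.
Qed.

Lemma fusion M : infinite M -> exists N, [/\ infinite N, included N M &
  forall s, sorted ltn s -> (forall x, x \in s -> N x) -> D s N].
Proof.
move=> hM; have [M0 [hM0 M0M D0]] := D_dense [::] hM.
have [m0 [_ M0m0]] := hM0 0.
pose I (p : nat * (nat -> Prop)) := [/\ infinite p.2, p.2 p.1 & included p.2 M0].
pose R (p q : nat * (nat -> Prop)) := [/\ included q.2 p.2, p.1 < q.1 &
  forall a : pred nat, D (filter a (iota 0 p.1.+1)) q.2].
have [g [_ hg]] : exists g, g 0 = (m0, M0) /\ forall k, I (g k) /\ R (g k) (g k.+1).
  apply: dependent_choice => [|[n A] [hA An AM0]]; first by split.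
  have [A' [hA' A'A DA']] := D_dense_all (subseqs (iota 0 n.+1)) hA.
  have [n' [nn' A'n']] := hA' n.+1.
  exists (n', A'); split; first by split=> // x /A'A/AM0.
  by split=> // a; apply: DA'; exact: mem_subseqs_filter.
have g_mono : {mono (fun k => (g k).1) : i j / i < j}.
  apply/leqW_mono/leq_mono; apply: homo_ltn => [y x z|k]; first exact: ltn_trans.
  by have [] := (hg k).2.
have g_anti : {homo (fun k => (g k).2) : i j / i <= j >-> included j i}.
  apply: homo_leq => [A x //|A2 A1 A3 h12 h23 x /h23/h12 //|k].
  by have [] := (hg k).2.
have gM0 k : M0 (g k).1 by have [_ gk /(_ _ gk)] := (hg k).1.
exists (fun x => exists k, (g k).1 = x); split.
- move=> n; exists (g n).1; split; last by exists n.
  by elim: n => // n IH; apply: leq_ltn_trans IH _; rewrite g_mono.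
- by move=> x [k <-]; apply/M0M/gM0.
move=> s ss sN; have [-> | s0] := eqVneq s [::].
  by apply: D_sub D0 _ => x [k <-]; apply: gM0.
have [j gj] := sN _ (last_mem s0).
have Ds : D s (g j.+1).2.
  have [_ _ Dj] := (hg j).2; rewrite [X in D X](_ : s = filter (mem s) (iota 0 (g j).1.+1)) //.
  apply: (sorted_subset_filter (iota_ltn_sorted _ _) ss) => x xs.
  by rewrite mem_iota add0n ltnS gj (sorted_le_last ss xs).
apply: D_tail Ds _ => x [[k <-] above_s]; apply: (g_anti j.+1 k); last by have [] := (hg k).1.
by rewrite -g_mono gj; apply: above_s; exact: last_mem.
Qed.

End Fusion.

Lemma greedy_subset (Q : seq nat -> Prop) N :
  infinite N -> Q [::] ->
  (forall s, sorted ltn s -> (forall x, x \in s -> N x) -> Q s ->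
     eventually (fun n => N n -> Q (rcons s n))) ->
  exists N', [/\ infinite N', included N' N &
    forall s, sorted ltn s -> (forall x, x \in s -> N' x) -> Q s].
Proof.
move=> hN Q0 Q_rcons.
(* The filters of [L] are exactly its subsequences. *)
pose I L := [/\ sorted ltn L, forall x, x \in L -> N x & forall a : pred nat, Q (filter a L)].
pose R L L' := exists2 n, L' = rcons L n & size L <= n.
have [g [g0 hg]] : exists g, g 0 = [::] /\ forall k, I (g k) /\ R (g k) (g k.+1).
  apply: dependent_choice => [|L [sL LN QL]]; first by split.
  have Q_sub s : s \in subseqs L -> eventually (fun n => N n -> Q (rcons s n)).
    rewrite mem_subseqs => sub; have ss := subseq_sorted ltn_trans sub sL.
    have sL' := mem_subseq sub.
    apply: Q_rcons => [//|x /sL'/LN //|]; rewrite (sorted_subset_filter sL ss sL'); exact: QL.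
  have [n [_ [Nn [[Ln aboveL] Qn]]]] := infinite_tail hN (eventually_and
    (eventually_and (ex_intro _ (size L) (fun n h => h)) (above_eventually L))
    (eventually_all Q_sub)) 0.
  exists (rcons L n); split; last by exists n.
  split; first exact: sorted_rcons.
    by move=> x; rewrite mem_rcons => /predU1P[->|/LN].
  by move=> a; rewrite filter_rcons; case: (a n) => //; apply: Qn => //; exact: mem_subseqs_filter.
have size_g k : size (g k) = k.
  by elim: k => [|k IH]; rewrite ?g0 //; have [n -> _] := (hg k).2; rewrite size_rcons IH.
have g_mono : {homo g : i j / i <= j >-> {subset i <= j}}.
  apply: homo_leq => [L x //|L2 L1 L3 h12 h23 x /h12/h23 //|k].
  by have [n -> _] := (hg k).2; move=> x; rewrite mem_rcons; exact: predU1r.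
exists (fun x => exists k, x \in g k); split.
- move=> b; have [n gb bn] := (hg b).2; exists n; split; first by rewrite -(size_g b).
  by exists b.+1; rewrite gb mem_rcons mem_head.
- by move=> x [k]; have [_ gN _] := (hg k).1; exact: gN.
move=> s ss sN'.
have [K sK] : exists K, {subset s <= g K}.
  elim: s {ss} sN' => [|x s IH] sN'; first by exists 0.
  have [k1 h1] := IH (fun y ys => sN' y (predU1r _ _ ys)).
  have [k2 h2] := sN' x (mem_head _ _).
  exists (maxn k1 k2) => y /predU1P[->|/h1]; first exact: g_mono (leq_maxr _ _) _ h2.
  exact: g_mono (leq_maxl _ _) _.
have [sg _ Qg] := (hg K).1; rewrite (sorted_subset_filter sg ss sK); exact: Qg.
Qed.

Section NashWilliams.

Variable P : seq nat -> Prop.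

Definition meets (Y : nat -> Prop) : Prop := exists s, P s /\ initial_seg s Y.

Definition accepts s M : Prop := forall Y, infinite Y -> included Y M ->
  (forall y, Y y -> above s y) -> meets (fun x => x \in s \/ Y x).

Definition rejects s M : Prop := forall N, infinite N -> included N M -> ~ accepts s N.

Definition decides s M : Prop := accepts s M \/ rejects s M.

Lemma meets_ext X Y : (forall x, X x <-> Y x) -> meets X -> meets Y.
Proof. by move=> XY [s [Ps sX]]; exists s; split=> //; exact: initial_seg_ext sX. Qed.

Lemma accepts_tail s M N :
  accepts s M -> included (fun x => N x /\ above s x) M -> accepts s N.
Proof. by move=> acc NM Y hY YN Yabove; apply: acc => // y Yy; apply: NM; split; auto. Qed.

Lemma decides_tail s M N :
  decides s M -> included (fun x => N x /\ above s x) M -> decides s N.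
Proof.
move=> [acc | rej] NM; first by left; exact: accepts_tail acc NM.
right=> N' hN' N'N accN'.
apply: (rej (fun x => N' x /\ above s x)); first exact: infinite_tail hN' (above_eventually s).
  by move=> x [/N'N Nx sx]; apply: NM.
by apply: accepts_tail accN' _ => x [[]].
Qed.

Lemma decides_dense s M :
  infinite M -> exists N, [/\ infinite N, included N M & decides s N].
Proof.
move=> hM; case: (classic (exists N, [/\ infinite N, included N M & accepts s N])).
  by move=> [N [hN NM acc]]; exists N; split=> //; left.
by move=> none; exists M; split=> //; right=> N hN NM acc; apply: none; exists N.
Qed.

Lemma accepts_of_P s M : P s -> s <> [::] -> sorted ltn s -> accepts s M.
Proof. by move=> Ps s0 ss Y _ _ Yabove; exists s; split=> //; exact: initial_seg_cat. Qed.

(* If infinitely many n had [rcons s n] accepted, these n would accept [s]: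
   split an infinite set at its minimum. *)
Lemma rejects_rcons s N :
  rejects s N -> eventually (fun n => ~ (N n /\ accepts (rcons s n) N)).
Proof.
move=> rej; apply: NNPP => /infinite_of_not_eventually hA.
apply: (rej _ (infinite_tail hA (above_eventually s))); first by move=> x [[]].
move=> Y hY YA _; have [y0 [_ Yy0]] := hY 0.
have [y Yy ymin] := ex_minimum (ex_intro _ y0 Yy0).
pose Y' x := Y x /\ y < x.
have [[_ accy] _] := YA y Yy.
have hY' : infinite Y' by apply: infinite_tail hY (ex_intro _ y.+1 (fun n h => h)).
have Y'N : included Y' N by move=> x [/YA[[]]].
have Y'above x : Y' x -> above (rcons s y) x.
  by move=> [Yx yx] z; rewrite mem_rcons => /predU1P[-> // |]; apply: (YA x Yx).2.
apply: meets_ext (accy Y' hY' Y'N Y'above) => x; rewrite mem_rcons inE; split.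
  by case=> [/predU1P[->|]|[]]; auto.
case=> [xs | Yx]; first by left; rewrite xs orbT.
by case: (ltngtP x y) (ymin x Yx) => // [yx | ->] _; [right | left].
Qed.

Theorem nash_williams M : infinite M -> exists N, [/\ infinite N, included N M &
  (forall Y, infinite Y -> included Y N -> meets Y) \/
  (forall Y, infinite Y -> included Y N -> ~ meets Y)].
Proof.
move=> hM; have [N [hN NM decN]] := fusion decides_tail decides_dense hM.
have [acc0 | rej0] := decN [::] isT (fun _ => ltac:(by [])).
  exists N; split=> //; left=> Y hY YN.
  by apply: meets_ext (acc0 Y hY YN (fun _ _ _ => ltac:(by []))) => x; split=> [[] // | ]; right.
have [N' [hN' N'N rejN']] : exists N', [/\ infinite N', included N' N &
    forall s, sorted ltn s -> (forall x, x \in s -> N' x) -> rejects s N].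
  apply: (greedy_subset (Q := rejects^~ N) hN rej0) => s ss sN rejs.
  have [b hb] := eventually_and (rejects_rcons rejs) (above_eventually s).
  exists b => n /hb[not_acc sn] Nn.
  have rsN x : x \in rcons s n -> N x by rewrite mem_rcons => /predU1P[-> | /sN].
  by case: (decN _ (sorted_rcons ss sn) rsN) => // acc; case: not_acc.
exists N'; split=> [//||]; first by move=> x /N'N/NM.
right=> Y hY YN' [s [Ps [s0 [ss [sY _]]]]].
by apply: (rejN' s ss (fun x xs => YN' x (sY x xs)) N hN (fun _ h => h)); exact: accepts_of_P.
Qed.

End NashWilliams.

Definition cover (B : seq nat -> Prop) (x : nat) : Prop := exists s, B s /\ x \in s.

Lemma barrier_cover_infinite B :
  (forall s, B s -> fin_nat_set s) -> infinite_family B -> infinite (cover B).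
Proof.
move=> Bsorted Binf; apply: infinite_of_not_eventually => -[n notB].
have [s [Bs /negP]] := Binf (subseqs (iota 0 n)); apply.
rewrite [X in X \in _](sorted_subset_filter (iota_ltn_sorted 0 n) (Bsorted s Bs)).
  exact: mem_subseqs_filter.
move=> x xs; rewrite mem_iota add0n ltnNge; apply/negP => nx.
by apply: (notB x nx); exists s.
Qed.

Lemma barrier_initial_seg_uniq (B : seq nat -> Prop) Y s t :
  (forall s t, B s -> B t -> {subset s <= t} -> s = t) ->
  B s -> B t -> initial_seg s Y -> initial_seg t Y -> s = t.
Proof.
move=> Banti Bs Bt sY tY; case: (leqP (last 0 s) (last 0 t)) => [st | /ltnW ts].
  by apply: Banti => //; exact: initial_seg_subset sY tY st.
by apply/esym/Banti => //; exact: initial_seg_subset tY sY ts.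
Qed.

Lemma barrier_monochromatic B (col : seq nat -> nat) m M :
  barrier B -> infinite M -> included M (cover B) ->
  (forall Y s, infinite Y -> included Y M -> B s -> initial_seg s Y -> col s < m) ->
  exists c N, [/\ infinite N, included N M &
    forall Y s, infinite Y -> included Y N -> B s -> initial_seg s Y -> col s = c].
Proof.
move=> [_ [_ [Banti Bseg]]]; elim: m M => [|m IH] M hM MB col_lt.
  by have [s [Bs sM]] := Bseg M hM MB; have := col_lt M s hM (fun _ h => h) Bs sM.
have [N [hN NM [all_meet | no_meet]]] := nash_williams (fun s => B s /\ col s = m) hM.
  exists m, N; split=> // Y s hY YN Bs sY.
  have [t [[Bt <-] tY]] := all_meet Y hY YN.
  by rewrite (barrier_initial_seg_uniq Banti Bs Bt sY tY).
have [|c [N' [hN' N'N N'col]]] := IH N hN (fun x Nx => MB x (NM x Nx)).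
  move=> Y s hY YN Bs sY; have := col_lt Y s hY (fun x Yx => NM x (YN x Yx)) Bs sY.
  by rewrite ltnS leq_eqVlt => /predU1P[cs | //]; case: (no_meet Y hY YN); exists s.
by exists c, N'; split=> // x /N'N/NM.
Qed.

Lemma rado_good_of_fst_const B (f : seq nat -> nat * nat) N c :
  barrier B -> infinite N -> included N (cover B) ->
  (forall Y s, infinite Y -> included Y N -> B s -> initial_seg s Y -> (f s).1 = c) ->
  good radoLe B f.
Proof.
move=> [_ [_ [Banti Bseg]]] hN NB fc.
suff descent v Y s : infinite Y -> included Y N -> B s -> initial_seg s Y ->
    (f s).2 = v -> good radoLe B f.
  by have [s [Bs sN]] := Bseg N hN NB; exact: descent _ _ _ hN (fun _ h => h) Bs sN erefl.
elim/ltn_ind: v Y s => v IH Y s hY YN Bs sY fsv.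
have [y0 [_ Yy0]] := hY 0; have [y Yy ymin] := ex_minimum (ex_intro _ y0 Yy0).
pose Y' x := Y x /\ y < x.
have hY' : infinite Y' by apply: infinite_tail hY (ex_intro _ y.+1 (fun n h => h)).
have Y'N : included Y' N by move=> x [/YN].
have [t [Bt tY']] := Bseg Y' hY' (fun x Y'x => NB x (Y'N x Y'x)).
have st := tri_initial_segs Banti Bs Bt Yy ymin sY tY'.
case: (leqP (f s).2 (f t).2) => [le_st | lt_ts].
  exists s, t; do 3!split=> //; left; split=> //.
  by rewrite (fc Y s hY YN Bs sY) (fc Y' t hY' Y'N Bt tY').
by apply: (IH _ _ Y' t hY' Y'N Bt tY' erefl); rewrite -fsv.
Qed.

Lemma radoLe_fst_total x y : x.1 = y.1 -> radoLe x y \/ radoLe y x.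
Proof. by rewrite /radoLe => xy; case: (leqP x.2 y.2) => [|/ltnW] le; [left | right]; left. Qed.

Lemma max_antichainI X :
  antichain X ->
  (forall z, radoV z -> ~ X z -> exists x, X x /\ (radoLe x z \/ radoLe z x)) ->
  max_antichain X.
Proof.
move=> XA comp; split=> // Y [YV antiY] XY y Yy; apply: NNPP => Xny.
have [x [Xx xy]] := comp y (YV y Yy) Xny.
have nxy : x <> y by move=> exy; apply: Xny; rewrite -exy.
case: xy => [xy | yx]; first exact: antiY (XY x Xx) Yy nxy xy.
exact: antiY Yy (XY x Xx) (nesym nxy) yx.
Qed.

Lemma max_antichain_incomparable X z :
  max_antichain X -> radoV z -> (forall x, X x -> ~ radoLe x z /\ ~ radoLe z x) -> X z.
Proof.
move=> [[XV anti] maxX] Vz inc.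
apply: (maxX (fun x => X x \/ x = z)) => [|x Xx|]; [split | by left | by right].
  by move=> x [/XV | ->].
move=> x y [Xx | ->] [Xy | ->] // xy; first exact: anti.
  exact: (inc x Xx).1.
exact: (inc y Xy).2.
Qed.

Lemma UAM_fst_lt m x : UAM m x -> x.1 < m.
Proof.
move=> [X [maxX [[l [_ [sl Xl]]] Xx]]]; case: x Xx => c d Xcd /=.
have [[XV anti] _] := maxX; have cd : c < d := XV _ Xcd.
rewrite ltnNge; apply/negP => mc.
have Xfst z : X z -> z.1 \in map fst l by move/Xl/(map_f fst).
have [a ac aF] : exists2 a, a < c & a \notin map fst l.
  apply: NNPP => all_fst.
  have : {subset iota 0 c.+1 <= map fst l}.
    move=> a; rewrite mem_iota leq0n add0n ltnS leq_eqVlt => /predU1P[-> | ac].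
      exact: Xfst Xcd.
    by apply: NNPP => aF; apply: all_fst; exists a => //; apply/negP.
  move/(uniq_leq_size (iota_uniq 0 c.+1)); rewrite size_iota size_map sl; lia.
suff /Xfst : X (a, d) by rewrite (negPf aF).
apply: max_antichain_incomparable maxX _ _; first by rewrite /radoV /=; lia.
move=> [e f] Xef; have /eqP ea : e != a by apply: contraNneq aF => <-; exact: Xfst Xef.
have [-> | /eqP ne] := eqVneq (e, f) (c, d); first by rewrite /radoLe /=; lia.
have := anti _ _ Xef Xcd ne; have := anti _ _ Xcd Xef (nesym ne).
by rewrite /radoLe /=; lia.
Qed.

(* Maximal: the points (i, p+1), i <= p, and (p+1, q+2) are comparable with
   every point of first coordinate at most p+1, and (0, p+1) is below every
   point of larger first coordinate. *)
Definition rado_embed (x : nat * nat) : pset :=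
  fun z => (z.1 <= x.1 /\ z.2 = x.1.+1) \/ z = (x.1.+1, x.2.+2).

Lemma rado_embed_antichain x : radoV x -> antichain (rado_embed x).
Proof.
case: x => p q; rewrite /radoV /= => pq; split.
  by move=> [a b] [[/= ap ->] | [-> ->]]; rewrite /radoV /=; lia.
move=> [a b] [c d] [[/= ap ->] | [-> ->]] [[/= cp ->] | [-> ->]] ne; rewrite /radoLe /=;
  try lia.
- by case=> [[ac _] | ]; [apply: ne; rewrite ac | lia].
- by case: ne.
Qed.

Lemma rado_embed_max_antichain x : radoV x -> max_antichain (rado_embed x).
Proof.
move=> Vx; apply: max_antichainI (rado_embed_antichain Vx) _ => -[c d] _ _.
case: (ltngtP c x.1.+1) => [cx | xc | ->].
- exists (c, x.1.+1); split; last exact: radoLe_fst_total.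
  by left; rewrite -ltnS.
- by exists (0, x.1.+1); split; [left | left; right].
- by exists (x.1.+1, x.2.+2); split; [right | exact: radoLe_fst_total].
Qed.

Lemma rado_embed_dominated x y : radoV x -> radoV y ->
  (radoLe x y <-> dominated (rado_embed x) (rado_embed y)).
Proof.
case: x y => p q [p' q']; rewrite /radoV /radoLe /dominated /rado_embed /= => pq pq'.
split=> [[[<- qq'] | qp'] [a b] /= | dom].
- case=> [[ap ->] | [-> ->]]; first by exists (a, p.+1); split; left.
  by exists (p.+1, q'.+2); split; [right | left; split=> //; lia].
- case=> [[ap ->] | [-> ->]]; first by exists (p'.+1, q'.+2); split; [right | right=> /=; lia].
  by exists (p.+1, p'.+1); split; [left; split=> //=; lia | left; split=> //=; lia].
have [[a b] [/= [[ap' ->] | [-> ->]] le]] := dom (p.+1, q.+2) (or_intror erefl);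
  case: le => /=; lia.
Qed.

Lemma bqo_UAM m : bqo radoLe (UAM m).
Proof.
move=> B hB f UAMf; have [Bsorted [Binf _]] := hB.
have [c [N [hN NB fc]]] := barrier_monochromatic (col := fun s => (f s).1) hB
  (barrier_cover_infinite Bsorted Binf) (fun _ h => h)
  (fun Y s _ _ Bs _ => UAM_fst_lt (UAMf s Bs)).
exact: rado_good_of_fst_const hB hN NB fc.
Qed.

Theorem lemma6p5 :
  (forall m : nat, bqo radoLe (UAM m)) /\
  (exists e : nat * nat -> pset,
     (forall x, radoV x -> max_antichain (e x)) /\
     (forall x y, radoV x -> radoV y -> (radoLe x y <-> dominated (e x) (e y)))).
Proof.
split; first exact: bqo_UAM.
by exists rado_embed; split; [exact: rado_embed_max_antichain | exact: rado_embed_dominated].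
Qed.
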